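(* Let $S$ be a finite $p$-group for an odd prime $p$. Then $|J(S)\mathfrak{X}(S):\mathfrak{X}(S)|\neq p$.
   Context: For a finite $p$-group $G$ and subgroups $A,B$, write $[A,B;1]=[A,B]$ and $[A,B;k]=[[A,B;k-1],B]$. $\Omega_1(G)$ denotes the subgroup generated by the elements of order $p$ in $G$. The Oliver subgroup $\mathfrak{X}(G)$ of a finite $p$-group $G$ is the unique largest normal subgroup $K$ of $G$ admitting a chain $1=Q_0\leq Q_1\leq\cdots\leq Q_n=K$ of normal subgroups $Q_i\unlhd G$ such that $[\Omega_1(C_G(Q_{i-1})),Q_i;p-1]=1$ for each $1\leq i\leq n$. $J(S)$ is the Thompson subgroup of $S$: the subgroup generated by all elementary abelian $p$-subgroups of $S$ whose rank equals the $p$-rank of $S$ (the largest rank of an elementary abelian $p$-subgroup of $S$). *)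

From mathcomp Require Import all_boot all_fingroup all_solvable.
From Stdlib Require Import ClassicalDescription.
Set Implicit Arguments. Unset Strict Implicit. Unset Printing Implicit Defensive.
Local Open Scope group_scope.

Section Defs.
Variable gT : finGroupType.
Implicit Types (A B : {set gT}) (G K L : {group gT}).

(* [A, B; k] with [A,B;1] = [A,B] and [A,B;k] = [[A,B;k-1],B];
   (iter_comm A B 0 = A, so iter_comm A B k = [A,B;k] for k >= 1). *)
Fixpoint iter_comm A B (k : nat) : {set gT} :=
  if k is k'.+1 then [~: iter_comm A B k', B] else A.

Definition Omega1 (p : nat) A : {set gT} := <<[set x in A | #[x] == p]>>.

Definition oliver_step (p : nat) A (L K : {group gT}) : bool :=
  (L \subset K) && (iter_comm (Omega1 p 'C_A(L)) K p.-1 == 1).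

(* K admits a chain 1 = Q_0 <= Q_1 <= ... <= Q_n = K of normal subgroups
   of G with [Omega_1(C_G(Q_{i-1})), Q_i; p-1] = 1 for all 1 <= i <= n. *)
Definition oliver_admissible (p : nat) (G K : {group gT}) : Prop :=
  exists s : seq {group gT},
    [&& all (fun Q : {group gT} => Q <| G) s,
        path (oliver_step p G) 1%G s & last 1%G s == K].

Definition oliver_admissibleb p G K : bool :=
  if excluded_middle_informative (oliver_admissible p G K) then true else false.

(* The Oliver subgroup X(G): the subgroup generated by all normal subgroups
   admitting such a chain (this is the unique largest one). *)
Definition oliver_subgroup (p : nat) (G : {group gT}) : {set gT} :=
  <<\bigcup_(K : {group gT} | oliver_admissibleb p G K) K>>.

Definition thompson_J (p : nat) (S : {group gT}) : {set gT} :=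
  <<\bigcup_(E in 'E_p^('r_p(S))(S)) E>>.
End Defs.

From mathcomp Require Import all_boot all_fingroup all_solvable.
From Stdlib Require Import ClassicalDescription.
Set Implicit Arguments. Unset Strict Implicit. Unset Printing Implicit Defensive.
Local Open Scope group_scope.

(* Normal subgroups admitting an Oliver chain are closed under products, so
   X := X(S) is the largest one; maximality and p - 1 >= 2 force C_S(X) <= X
   (climb the upper central series), hence V := Omega_1(C_S(X)) is elementary
   abelian. If |J X : X| = p, some E in E*(S) satisfies E X = J X, so
   |E : C_E(V)| <= p. Since V C_E(V) is elementary abelian it is no larger
   than E, which gives |V : C_V(E)| <= p; then E acts trivially on V / C_V(E),
   so [V, E X; 2] = 1 and J X = E X would extend the chain of X. *)

Section IteratedCommutators.
Variable gT : finGroupType.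
Implicit Types (A B H K R : {set gT}) (G : {group gT}).

Lemma commg_centMl H K R : H \subset 'C(K) -> [~: H, K * R] \subset [~: H, R].
Proof.
move=> cHK; rewrite gen_subG; apply/subsetP.
move=> _ /imset2P[h _ hH /mulsgP[k r kK rR ->] ->].
rewrite commgMJ; have /commgP/eqP-> : commute h k by apply: (centsP cHK).
by rewrite conj1g mulg1 mem_commg.
Qed.

Lemma commg_cent_norm H K R :
  H \subset 'C(K) -> R \subset 'N(K) -> [~: H, R] \subset 'C(K).
Proof.
move=> cHK nKR; apply: subset_trans (commSg R cHK) _.
apply: subset_trans (commgS _ (subset_gen R)) _.
by rewrite (commg_subl [group of 'C(K)] [group of <<R>>]) /= gen_subG norms_cent.
Qed.

Lemma iter_commS A A' B n :
  A \subset A' -> iter_comm A B n \subset iter_comm A' B n.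
Proof. by move=> sAA'; elim: n => //= n IHn; apply: commSg. Qed.

Lemma iter_comm_centM H K R n : H \subset 'C(K) -> R \subset 'N(K) ->
  iter_comm H (K * R) n \subset iter_comm H R n :&: 'C(K).
Proof.
move=> cHK nKR; elim: n => [|n IHn] /=; first by rewrite subsetI subxx.
case/subsetIP: IHn => sIH cIK.
have sI := commg_centMl R cIK.
by rewrite subsetI !(subset_trans sI) ?commSg ?commg_cent_norm.
Qed.

Lemma iter_comm_trivg G B n :
  (iter_comm G B n == 1) = (iter_comm G B n \subset [1]).
Proof. by case: n => [|n] /=; rewrite subG1. Qed.

Lemma iter_comm_eq1 A B n :
  1 < n -> [~: A, B, B] = 1 -> iter_comm A B n = 1.
Proof.
case: n => [|[|n]] // _ AB2; elim: n => [|n /= ->] //.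
by apply/commG1P; apply: sub1G.
Qed.

End IteratedCommutators.

Section Omega1.
Variables (gT : finGroupType) (p : nat).
Implicit Types (A B : {set gT}) (G H K S : {group gT}).

Canonical Omega1_group A : {group gT} := Eval hnf in [group of Omega1 p A].

Lemma Omega1_sub G : Omega1 p G \subset G.
Proof. by rewrite gen_subG; apply/subsetP => x; rewrite inE => /andP[]. Qed.

Lemma Omega1S A B : A \subset B -> Omega1 p A \subset Omega1 p B.
Proof.
move=> sAB; apply: genS; apply/subsetP => x; rewrite !inE => /andP[xA ->].
by rewrite (subsetP sAB).
Qed.

Lemma Omega1_norms G H : H \subset 'N(G) -> H \subset 'N(Omega1 p G).
Proof.
move=> nGH; apply: norms_gen; apply/subsetP => h hH; rewrite inE.
apply/subsetP => y; rewrite mem_conjg !inE orderJ -mem_conjg.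
by rewrite (normP (subsetP nGH h hH)).
Qed.

Lemma Omega1_abelem G : p.-group G -> abelian G -> p.-abelem (Omega1 p G).
Proof.
move=> pG cGG; apply: abelemS (Ohm1_abelem pG cGG).
rewrite /= (OhmE 1 pG); apply: genS; apply/subsetP => x.
by rewrite !inE => /andP[-> /eqP ox]; rewrite expn1 -ox expg_order eqxx.
Qed.

Lemma Omega1_subcent_abelem S K : p.-group S -> 'C_S(K) \subset K ->
  p.-abelem (Omega1 p 'C_S(K)).
Proof.
move=> pS sCK; rewrite Omega1_abelem ?(pgroupS (subsetIl _ _) pS) //.
by rewrite /abelian (subset_trans (subsetIr _ _)) ?centS.
Qed.

End Omega1.

Section OliverChains.
Variables (gT : finGroupType) (p : nat) (S : {group gT}).
Implicit Types (K L Q R : {group gT}).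

Lemma oliver_admissibleP K :
  reflect (oliver_admissible p S K) (oliver_admissibleb p S K).
Proof.
by rewrite /oliver_admissibleb; case: excluded_middle_informative; constructor.
Qed.

Lemma oliver_admissible_normal K : oliver_admissible p S K -> K <| S.
Proof.
case=> s /and3P[nsS _ /eqP <-].
have := mem_last 1%G s; rewrite inE => /orP[/eqP -> | ]; first exact: normal1.
exact: (allP nsS).
Qed.

Lemma oliver_admissible1 : oliver_admissible p S 1%G.
Proof. by exists [::]; rewrite /= eqxx. Qed.

Lemma oliver_admissible_ext K Q :
    oliver_admissible p S K -> Q <| S -> K \subset Q ->
  iter_comm (Omega1 p 'C_S(K)) Q p.-1 == 1 -> oliver_admissible p S Q.
Proof.
case=> s /and3P[nsS chain /eqP lastK] nQS sKQ VQ; exists (rcons s Q).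
rewrite all_rcons nQS nsS rcons_path chain lastK /oliver_step sKQ VQ.
by rewrite last_rcons eqxx.
Qed.

(* Omega_1(C_S(K L)) centralises K and lies in Omega_1(C_S(L)), so commutation
   with K Q reduces to commutation with Q. *)
Lemma oliver_step_joinl K L Q : K <| S -> Q <| S ->
  oliver_step p S L Q -> oliver_step p S (K <*> L)%G (K <*> Q)%G.
Proof.
move=> nsKS nsQS /andP[sLQ LQ]; rewrite /oliver_step /= genS ?setUS //=.
have nKQ : Q \subset 'N(K) := subset_trans (normal_sub nsQS) (normal_norm nsKS).
set V := Omega1 p _; rewrite (norm_joinEr nKQ) iter_comm_trivg.
have cVK : V \subset 'C(K).
  by rewrite (subset_trans (Omega1_sub _ _)) // subIset // centS ?joing_subl ?orbT.
have sVL : V \subset Omega1 p 'C_S(L).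
  by apply: Omega1S; rewrite setIS // centS // joing_subr.
apply: subset_trans (iter_comm_centM p.-1 cVK nKQ) _.
rewrite iter_comm_trivg in LQ.
by rewrite subIset // (subset_trans (iter_commS _ _ sVL)).
Qed.

Lemma oliver_admissibleY K L :
    oliver_admissible p S K -> oliver_admissible p S L ->
  oliver_admissible p S (K <*> L)%G.
Proof.
move=> admK [t /and3P[nsT chainT /eqP lastL]].
have nsKS := oliver_admissible_normal admK.
case: admK => s /and3P[nsS chainS /eqP lastK].
have K1 : joinG K 1%G = K by apply: val_inj; rewrite /= joingG1.
exists (s ++ map (joinG K) t).
rewrite all_cat nsS cat_path chainS lastK last_cat lastK.
rewrite -[X in path _ X _]K1 -[X in last X _]K1 last_map lastL eqxx andbT.
rewrite all_map path_map; apply/andP; split.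
  by apply/allP => Q /(allP nsT) /= nsQS; apply: normalY.
apply: (sub_in_path (P := [pred Q : {group gT} | Q <| S])) chainT; last first.
  by rewrite /= normal1 nsT.
by move=> L' Q; rewrite !inE => nsL' nsQ; apply: oliver_step_joinl.
Qed.

Lemma oliver_subgroup_max :
  exists2 K : {group gT}, oliver_subgroup p S = K &
    [/\ oliver_admissible p S K & forall L, oliver_admissible p S L -> L \subset K].
Proof.
have /oliver_admissibleP adm1 := oliver_admissible1.
have [K /oliver_admissibleP admK maxK] :=
  arg_maxnP (fun K : {group gT} => #|K|) adm1.
have maxK' L : oliver_admissible p S L -> L \subset K.
  move/(oliver_admissibleY admK)/oliver_admissibleP/maxK => leKL.
  have /eqP-> : K :==: K <*> L by rewrite eqEcard joing_subl.
  exact: joing_subr.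
exists K => //; apply/eqP; rewrite eqEsubset gen_subG.
apply/andP; split; first by apply/bigcupsP => L /oliver_admissibleP /maxK'.
exact/sub_gen/(bigcup_sup K)/oliver_admissibleP.
Qed.

Lemma oliver_admissible_extM K R Q : 2 < p ->
    oliver_admissible p S K -> Q <| S -> Q :=: K * R ->
    [~: Omega1 p 'C_S(K), R] \subset 'C(K) :&: 'C(R) ->
  oliver_admissible p S Q.
Proof.
move=> p_gt2 admK nsQS defQ VR; apply: oliver_admissible_ext admK nsQS _ _.
  by rewrite defQ mulG_subl.
rewrite iter_comm_eq1 -?subn1 ?ltn_subRL //; apply/commG1P.
rewrite defQ centM (subset_trans (commg_centMl _ _)) //.
by rewrite (subset_trans (Omega1_sub _ _)) ?subsetIr.
Qed.

(* Climb the upper central series: if C_S(K) :&: Z_i(S) <= K, then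
   R := C_S(K) :&: Z_{i+1}(S) has [Omega_1(C_S(K)), R] <= K, so K R extends
   the chain of K. *)
Lemma oliver_max_subcent K : p.-group S -> 2 < p ->
    oliver_admissible p S K -> (forall L, oliver_admissible p S L -> L \subset K) ->
  'C_S(K) \subset K.
Proof.
move=> pS p_gt2 admK maxK; have nsKS := oliver_admissible_normal admK.
have nKS := normal_norm nsKS.
have nsCS : 'C_S(K) <| S by have := subcent_normal S K; rewrite (setIidPl nKS).
have /ucnP[n ZnS] := pgroup_nil pS.
suff sCZK i : 'C_S(K) :&: 'Z_i(S) \subset K.
  by have := sCZK n; rewrite ZnS (setIidPl (subsetIl _ _)).
elim: i => [|i IHi]; first by rewrite ucn0 setIg1 sub1G.
set R := ('C_S(K) :&: 'Z_i.+1(S))%G.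
have nsRS : R <| S by apply: normalI (ucn_normal _ _).
have nKR : R \subset 'N(K) := subset_trans (normal_sub nsRS) nKS.
have cRK : R \subset 'C(K) by rewrite subIset ?subsetIr.
suff /maxK : oliver_admissible p S (K <*> R)%G.
  by apply: subset_trans; apply: joing_subr.
apply: oliver_admissible_extM (normalY nsKS nsRS) (norm_joinEr nKR) _ => //.
set V := Omega1 p _.
have sVS : V \subset S by rewrite (subset_trans (Omega1_sub _ _)) ?subsetIl.
have VRK : [~: V, R] \subset 'C(K).
  by rewrite commg_cent_norm // (subset_trans (Omega1_sub _ _)) ?subsetIr.
have VRZ : [~: V, R] \subset 'Z_i(S).
  by rewrite commGC (subset_trans _ (ucn_comm i S)) ?commgSS ?subsetIr.
have VRS : [~: V, R] \subset S := subset_trans VRZ (ucn_sub i S).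
have cKR : K \subset 'C(R) by rewrite centsC.
rewrite subsetI VRK (subset_trans _ cKR) // (subset_trans _ IHi) //.
by rewrite !subsetI VRS VRK.
Qed.

End OliverChains.

Section Thompson.
Variables (gT : finGroupType) (p : nat) (S : {group gT}).

Canonical thompson_J_group : {group gT} := Eval hnf in [group of thompson_J p S].

Lemma thompson_J_sub : thompson_J p S \subset S.
Proof. by rewrite gen_subG; apply/bigcupsP => E /pnElemP[]. Qed.

Lemma thompson_J_normal : thompson_J p S <| S.
Proof.
rewrite /normal thompson_J_sub norms_gen //; apply/subsetP => g gS; rewrite inE.
apply/subsetP => y; rewrite mem_conjg => /bigcupP[E EE yE].
apply/bigcupP; exists (E :^ g)%G; last by rewrite mem_conjg.
by rewrite -(pnElemJ g) (conjGid gS) in EE.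
Qed.

Lemma thompson_J_index_prime (K : {group gT}) : prime p -> K <| S ->
    #|thompson_J p S * K : K| = p ->
  exists2 E : {group gT}, E \in 'E_p^('r_p(S))(S) & E * K = thompson_J p S * K.
Proof.
move=> p_pr nsKS iJK; set J := thompson_J p S.
have nKS := normal_norm nsKS.
have nKJ : J \subset 'N(K) := subset_trans thompson_J_sub nKS.
have /subsetPn[x /bigcupP[E EE xE] xK] :
    ~~ (\bigcup_(E in 'E_p^('r_p(S))(S)) E \subset K).
  by apply: contraTN p_pr => sJK; rewrite -iJK mulSGid ?gen_subG ?indexgg.
have sEJ : E \subset J by rewrite sub_gen // (bigcup_sup E).
exists E => //; have nKE := subset_trans sEJ nKJ.
have sEKJK : E <*> K \subset J <*> K by rewrite genS ?setSU.
rewrite -!norm_joinEl //; apply/eqP; rewrite eqEcard sEKJK /=.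
have iEK : #|E <*> K : K| = p.
  apply/(prime_nt_dvdP p_pr).
    apply: contra xK => /eqP/(index1g (joing_subr E K)) defK.
    by rewrite defK (subsetP (joing_subl E K)).
  by rewrite -iJK -norm_joinEl ?indexSg ?joing_subr.
rewrite -(Lagrange (joing_subr E K)) -(Lagrange (joing_subr J K)) iEK /=.
by rewrite norm_joinEl ?iJK.
Qed.

End Thompson.

Lemma pgroup_comm_card_le_prime (gT : finGroupType) p (G H A : {group gT}) :
    prime p -> p.-group G -> H \subset G -> A \subset 'N_G(H) -> #|H| <= p ->
  [~: H, A] = 1.
Proof.
move=> p_pr pG sHG nHA leHp; have [-> | ntH] := eqsVneq H 1; first exact: comm1G.
have ltHA_H := proper_card (nil_comm_properl (pgroup_nil pG) sHG ntH nHA).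
have pHA : p.-group [~: H, A].
  rewrite (pgroupS _ (pgroupS sHG pG)) // commg_subl.
  by rewrite (subset_trans nHA) ?subsetIr.
apply/eqP; rewrite trivg_card1.
move: (leq_trans ltHA_H leHp); rewrite (card_pgroup pHA).
by case: (logn p _) => // k; rewrite expnS ltnNge leq_pmulr // expn_gt0 prime_gt0.
Qed.

Section ElementaryAbelian.
Variables (gT : finGroupType) (p : nat).
Implicit Types (S V E : {group gT}).

Lemma abelemY V E :
  p.-abelem V -> p.-abelem E -> E \subset 'C(V) -> p.-abelem (V <*> E).
Proof.
move=> abV abE cVE; have cW : abelian (V <*> E).
  by rewrite abelianY (abelem_abelian abV) (abelem_abelian abE).
have pW : p.-group (V <*> E).
  by rewrite cent_joinEr // pgroupM !abelem_pgroup.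
apply/(abelem_Ohm1P cW pW)/eqP; rewrite eqEsubset Ohm_sub join_subG.
by rewrite -{1}(Ohm1_id abV) -{2}(Ohm1_id abE) !OhmS ?joing_subl ?joing_subr.
Qed.

(* |V| |C_E(V)| = |V C_E(V)| |V :&: C_E(V)|, and V C_E(V) is elementary
   abelian, so its order is at most |E|. *)
Lemma pnElem_rank_index_subcent S V E : prime p ->
    V \subset S -> p.-abelem V -> E \in 'E_p^('r_p(S))(S) ->
  #|E : 'C_E(V)| <= p -> #|V : 'C_V(E)| <= p.
Proof.
move=> p_pr sVS abV /pnElemP[sES abE logE] iEV.
set D := 'C_E(V); set U := 'C_V(E).
have cVD : D \subset 'C(V) := subsetIr _ _.
have abW : p.-abelem (V <*> D) by rewrite abelemY // (abelemS (subsetIl _ _) abE).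
have leWE : #|V <*> D| <= #|E|.
  rewrite (card_pgroup (abelem_pgroup abW)) (card_pgroup (abelem_pgroup abE)).
  rewrite leq_pexp2l ?prime_gt0 // logE logn_le_p_rank //.
  by apply/pElemP; rewrite join_subG sVS (subset_trans (subsetIl _ _)).
have sVDU : V :&: D \subset U.
  apply/subsetP => x /setIP[xV /setIP[xE _]].
  by rewrite inE xV (subsetP (abelem_abelian abE)).
have := mul_cardG V D; rewrite -cent_joinEr // => cardVD.
rewrite -(leq_pmul2l (cardG_gt0 [group of U])) Lagrange ?subsetIl //.
rewrite -(leq_pmul2r (cardG_gt0 [group of D])) cardVD.
apply: leq_trans (leq_mul leWE (subset_leq_card sVDU)) _.
rewrite -(Lagrange (subsetIl E 'C(V))) -/D [in X in _ <= X]mulnC -mulnA.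
by rewrite leq_pmul2l ?cardG_gt0 // mulnC leq_mul2l iEV orbT.
Qed.

Lemma comm_sub_subcent_index_prime S V E : prime p -> p.-group S ->
    V \subset S -> E \subset S -> abelian V -> E \subset 'N(V) ->
  #|V : 'C_V(E)| <= p -> [~: V, E] \subset 'C_V(E).
Proof.
move=> p_pr pS sVS sES cVV nVE iVU; set U := 'C_V(E).
have nUV : V \subset 'N(U) := sub_abelian_norm cVV (subsetIl _ _).
have nUE : E \subset 'N(U) := normsI nVE (norms_cent (normG E)).
have nUVE : [~: V, E] \subset 'N(U) by rewrite (subset_trans _ nUV) // commg_subl.
rewrite -quotient_sub1 // quotientR //.
rewrite (@pgroup_comm_card_le_prime _ p ((V <*> E) / U)%G (V / U)%G (E / U)%G) //.
- by rewrite quotient_pgroup // (pgroupS _ pS) // join_subG sVS.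
- by rewrite quotientS ?joing_subl.
- by rewrite subsetI quotientS ?joing_subr ?quotient_norms.
by rewrite card_quotient.
Qed.

End ElementaryAbelian.

Theorem corollary3p4 (p : nat) (gT : finGroupType) (S : {group gT}) :
  prime p -> odd p -> p.-group S ->
  #|thompson_J p S * oliver_subgroup p S : oliver_subgroup p S| != p.
Proof.
move=> p_pr p_odd pS; have p_gt2 := odd_prime_gt2 p_odd p_pr.
have [X -> [admX maxX]] := oliver_subgroup_max p S.
have nsXS := oliver_admissible_normal admX; have nXS := normal_norm nsXS.
apply/eqP => iJX; have [E EE defEX] := thompson_J_index_prime p_pr nsXS iJX.
have [sES abE _] := pnElemP EE; have nXE := subset_trans sES nXS.
set V := Omega1 p 'C_S(X); have [sVS cVX] := subsetIP (Omega1_sub p 'C_S(X)).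
have abV : p.-abelem V.
  exact: Omega1_subcent_abelem pS (oliver_max_subcent pS p_gt2 admX maxX).
have iEV : #|E : 'C_E(V)| <= p.
  have sEX_CEV : E :&: X \subset 'C_E(V) by rewrite setIS // centsC.
  by rewrite -iJX -defEX (normC nXE) indexMg -indexgI dvdn_leq ?indexgS.
have iVE := pnElem_rank_index_subcent p_pr sVS abV EE iEV.
have nVE : E \subset 'N(V).
  by rewrite (subset_trans sES) ?Omega1_norms ?normsI ?normG ?norms_cent.
have cVE := comm_sub_subcent_index_prime p_pr pS sVS sES
  (abelem_abelian abV) nVE iVE.
have defJX : thompson_J p S <*> X = X * E.
  by rewrite norm_joinEl ?(subset_trans (thompson_J_sub p S)) // -defEX normC.
have nsJXS := normalY (thompson_J_normal p S) nsXS.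
have /maxX := oliver_admissible_extM p_gt2 admX nsJXS defJX
  (subset_trans cVE (setSI _ cVX)).
rewrite join_subG => /andP[sJX _].
by move: iJX; rewrite mulSGid // indexgg => p1; rewrite -p1 in p_pr.
Qed.
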